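(* Let $\ell$ be a positive odd integer with at most $t$ distinct prime factors. Suppose there exist $t+1$ primes $p_1<p_2<\cdots<p_{t+1}$ with $p_1\ge 3$ such that any two of $p_1-1,\dots,p_{t+1}-1$ have no common odd prime factor. Then for every integer $n$ with $p_{t+1}-1\le n\le 2p_1-2$, $\Omega_\ell(n)$ is not a powerful number.
   Context: A positive integer $a$ is called a powerful number if for every prime $p$, $p\mid a$ implies $p^2\mid a$. $\Omega_\ell(n)=\prod_{a=1}^{n}(a^\ell+1)$. *)

From mathcomp Require Import all_boot.
Set Implicit Arguments. Unset Strict Implicit. Unset Printing Implicit Defensive.

Definition powerful (a : nat) : Prop :=
  0 < a /\ forall p : nat, prime p -> p %| a -> p ^ 2 %| a.

Definition Omega (l n : nat) : nat := \prod_(1 <= a < n.+1) (a ^ l + 1).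

From mathcomp Require Import all_boot ssralg ssrint intdiv zmodp finfield.
From mathcomp Require Import ring zify.
Import GRing.Theory.

Set Implicit Arguments. Unset Strict Implicit. Unset Printing Implicit Defensive.

(* Call a prime P admissible for l when l is coprime to P (P - 1).  The proof
   that Omega l n is not powerful has two halves.
   1. If P is admissible, l is odd and P - 1 <= n <= 2 P - 2, then P divides
      Omega l n exactly once.  Since x |-> x ^ l is injective on 'F_P, the
      prime P divides a ^ l + 1 only if it divides a + 1, i.e. only for the
      factor a = P - 1 of the range; and (P - 1) ^ l + 1 = l P modulo P ^ 2,
      so P divides that factor while P ^ 2 would force P | l.
   2. Some p i is admissible.  A prime factor q of l (odd, as l is) cannot
      divide both p i (p i - 1) and p j (p j - 1) for i < j: the hypothesis
      excludes q | p i - 1, p j - 1, and q = p i | p j - 1 (or q = p j | p i - 1)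
      is impossible because p j <= 2 p i.  By pigeonhole the at most t prime
      factors of l then miss one of the t + 1 primes. *)

Section PowersModPrime.
Local Open Scope ring_scope.

Variables (p l : nat).
Hypotheses (p_pr : prime p) (l_gt0 : (0 < l)%N) (co_l : coprime l p.-1).

Lemma expr_Fp_period (x : 'F_p) (k : nat) : x ^+ (1 + k * p.-1) = x.
Proof.
have p_eq : p = p.-1.+1 by rewrite prednK // prime_gt0.
elim: k => [|k IHk]; first by rewrite expr1.
rewrite mulSn addnCA exprD IHk -exprSr -p_eq.
by have := expf_card x; rewrite card_Fp.
Qed.

Lemma expr_Fp_inj : injective (fun x : 'F_p => x ^+ l).
Proof.
have [u _] := Bezoutr p.-1 l_gt0.
rewrite gcdnC (eqP co_l) => /dvdnP [w inv_l].
have root_l (x : 'F_p) : x = (x ^+ l) ^+ w by rewrite -exprM mulnC -inv_l expr_Fp_period.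
by move=> x y /= xy; rewrite [x]root_l [y]root_l xy.
Qed.

Lemma prime_dvd_pow_add1 (a : nat) : odd l -> (p %| a ^ l + 1 -> p %| a.+1)%N.
Proof.
move=> l_odd; have ch := pchar_Fp p_pr.
rewrite !(dvdn_pcharf ch) -[a.+1]addn1 !natrD natrX addr_eq0 => /eqP a_l.
have : (a%:R : 'F_p) ^+ l = (-1) ^+ l by rewrite -signr_odd l_odd expr1.
by move/expr_Fp_inj => ->; rewrite addNr.
Qed.

End PowersModPrime.

Section PowersModSquare.
Local Open Scope ring_scope.

Lemma expr_subr1_mod_sq (R : comPzRingType) (x : R) (k : nat) :
  exists c : R, (x - 1) ^+ k = (-1) ^+ k * (1 - k%:R * x) + c * x ^+ 2.
Proof.
elim: k => [|k [c IHk]]; first by exists 0; rewrite !expr0 mulr0n; ring.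
exists ((x - 1) * c - (-1) ^+ k * k%:R).
rewrite exprS IHk mulrS [(-1) ^+ k.+1]exprS.
set s := (-1) ^+ k; ring.
Qed.

Lemma pred_pow_add1_mod_sq (m l : nat) : (0 < m)%N -> odd l ->
  exists c : int, ((m.-1 ^ l + 1)%N : int) = l%:Z * m%:Z + c * m%:Z ^+ 2.
Proof.
move=> m_gt0 l_odd; have [c expand] := expr_subr1_mod_sq m%:Z l.
exists c; rewrite PoszD -natz natrX natz predn_int // expand.
rewrite -signr_odd l_odd expr1 natz; ring.
Qed.

Lemma dvd_pred_pow_add1 (m l : nat) : (0 < m)%N -> odd l -> (m %| m.-1 ^ l + 1)%N.
Proof.
move=> m_gt0 l_odd; rewrite -[(m %| _)%N]/(m%:Z %| _%:Z)%Z.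
have [c ->] := pred_pow_add1_mod_sq m_gt0 l_odd.
apply: rpredD; first exact/dvdz_mull/dvdzz.
by rewrite expr2 mulrA; apply/dvdz_mull/dvdzz.
Qed.

Lemma sq_dvd_pred_pow_add1 (m l : nat) : (0 < m)%N -> odd l ->
  (m ^ 2 %| m.-1 ^ l + 1 -> m %| l)%N.
Proof.
move=> m_gt0 l_odd; rewrite -[(_ %| _.-1 ^ _ + _)%N]/(_%:Z %| _%:Z)%Z.
have [c ->] := pred_pow_add1_mod_sq m_gt0 l_odd.
rewrite rpredDr; last exact/dvdz_mull/dvdzz.
by rewrite -PoszM -(dvdn_pmul2r m_gt0) mulnn.
Qed.

End PowersModSquare.

Lemma dvdn_lt_double (x y : nat) : 0 < x -> y %| x -> x < 2 * y -> x = y.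
Proof.
move=> x_gt0 /dvdnP [k x_eq]; subst x.
move: x_gt0; rewrite muln_gt0 => /andP [k_gt0 y_gt0].
rewrite ltn_pmul2r // => k_lt2.
suff -> : k = 1 by rewrite mul1n.
lia.
Qed.

Section OmegaAtAdmissiblePrime.

Variables (P l n : nat).
Hypotheses (P_pr : prime P) (l_gt0 : 0 < l) (l_odd : odd l).
Hypotheses (co_l : coprime l (P * P.-1)) (P_le : P.-1 <= n) (le_2P : n <= 2 * P - 2).

Let co_l_pred : coprime l P.-1. Proof. by move: co_l; rewrite coprimeMr => /andP []. Qed.

Lemma coprime_Omega_cofactor :
  coprime P (\prod_(a <- index_iota 1 n.+1 | a != P.-1) (a ^ l + 1)).
Proof.
rewrite prime_coprime // Euclid_dvd_prod // big_has_cond.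
apply/hasPn => a; rewrite mem_index_iota => /andP [_ a_le] /=.
apply/negP => /andP [a_neq /(prime_dvd_pow_add1 P_pr l_gt0 co_l_pred l_odd) P_dvd].
have a1_eq : a.+1 = P by apply: (dvdn_lt_double (ltn0Sn a) P_dvd); lia.
by move: a_neq; rewrite -a1_eq eqxx.
Qed.

(* P divides Omega l n exactly once, so Omega l n is not powerful. *)
Lemma Omega_not_powerful : ~ powerful (Omega l n).
Proof.
have P_gt0 := prime_gt0 P_pr; have P_gt1 := prime_gt1 P_pr.
have mem_pred : P.-1 \in index_iota 1 n.+1 by rewrite mem_index_iota; lia.
rewrite /powerful /Omega (bigD1_seq _ mem_pred) ?iota_uniq //= => -[_ powP].
have P_dvd : P %| P.-1 ^ l + 1 by apply: dvd_pred_pow_add1.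
have := powP P P_pr (dvdn_mulr _ P_dvd).
rewrite Gauss_dvdl; last exact/coprimeXl/coprime_Omega_cofactor.
move=> /(sq_dvd_pred_pow_add1 P_gt0 l_odd) P_dvd_l.
by move: co_l; rewrite coprime_sym coprimeMl prime_coprime // P_dvd_l.
Qed.

End OmegaAtAdmissiblePrime.

Lemma pigeonhole_index (T : eqType) (s : seq T) (n : nat) (R : nat -> pred T) :
  size s < n ->
  (forall i j x, i < j < n -> x \in s -> R i x -> R j x -> False) ->
  exists2 i, i < n & ~~ has (R i) s.
Proof.
move=> small_s R_excl.
case: (boolP (has (fun i => ~~ has (R i) s) (iota 0 n))) => [|/hasPn all_hit].
  by case/hasP => i; rewrite mem_iota => /andP [_ lt_in]; exists i.
have hit i : i < n -> has (R i) s.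
  by move=> lt_in; apply/negbNE/all_hit; rewrite mem_iota.
have /hasP [x0 _ _] := hit 0 (leq_ltn_trans (leq0n _) small_s).
pose f i := nth x0 s (find (R i) s).
have f_in i : i < n -> f i \in s by move/hit; rewrite has_find; apply: mem_nth.
have f_R i : i < n -> R i (f i) by move/hit; apply: nth_find.
have f_inj : {in iota 0 n &, injective f}.
  move=> i j; rewrite !mem_iota /= => lt_in lt_jn fij.
  have [lt_ij | lt_ji | //] := ltngtP i j; exfalso.
  - by apply: (R_excl i j (f i)); rewrite ?lt_ij ?f_in ?f_R // fij f_R.
  - by apply: (R_excl j i (f j)); rewrite ?lt_ji ?f_in ?f_R // -fij f_R.
have uniq_f : uniq (map f (iota 0 n)) by rewrite (map_inj_in_uniq f_inj) iota_uniq.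
suff : n <= size s by rewrite leqNgt small_s.
rewrite -(size_iota 0 n) -(size_map f); apply: uniq_leq_size uniq_f _.
by move=> y /mapP [i]; rewrite mem_iota => /andP [_ /f_in fi_s] ->.
Qed.

(* An odd prime a never divides b - 1 for a prime b <= 2 a: the only
   positive multiple of a below 2 a is a, and a + 1 is even. *)
Lemma prime_ndvd_pred (a b : nat) : prime a -> prime b -> 2 < a -> b <= 2 * a ->
  ~~ (a %| b.-1).
Proof.
move=> a_pr b_pr a_gt2 b_le; apply/negP => /dvdn_lt_double b1_eq.
have b_gt1 := prime_gt1 b_pr.
have b_eq : b = a.+1 by have := b1_eq; lia.
have a_odd : odd a by case: (even_prime a_pr) a_gt2 => // ->.
by have [b2|] := even_prime b_pr; [lia | rewrite b_eq /= a_odd].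
Qed.

Section AdmissiblePrimeExists.

Variables (l t : nat) (p : nat -> nat).
Hypotheses (l_gt0 : 0 < l) (l_odd : odd l) (few_primes : size (primes l) <= t).
Hypotheses (p_pr : forall i, i <= t -> prime (p i)).
Hypothesis p_incr : forall i j, i < j -> j <= t -> p i < p j.
Hypotheses (p0_ge3 : 3 <= p 0) (p_spread : p t <= 2 * p 0).
Hypothesis no_common_odd : forall i j, i < j -> j <= t -> forall q, prime q -> odd q ->
  ~~ ((q %| (p i).-1) && (q %| (p j).-1)).

Lemma p_ge_p0 i : i <= t -> p 0 <= p i.
Proof. by case: i => [//|i] le_it; apply/ltnW/p_incr. Qed.

Lemma p_le_pt i : i <= t -> p i <= p t.
Proof. by rewrite leq_eqVlt => /orP [/eqP -> // | /p_incr/(_ (leqnn t))/ltnW]. Qed.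

Lemma no_shared_factor i j q : i < j <= t -> q \in primes l ->
  q \in primes (p i * (p i).-1) -> q \in primes (p j * (p j).-1) -> False.
Proof.
case/andP=> lt_ij le_jt; have le_it := ltnW (leq_trans lt_ij le_jt).
rewrite !mem_primes => /and3P [q_pr _ q_l] /and3P [_ _ q_i] /and3P [_ _ q_j].
have q_odd : odd q := dvdn_odd q_l l_odd.
have ndvd x y : x <= t -> y <= t -> ~~ (p x %| (p y).-1).
  move=> le_xt le_yt; apply: prime_ndvd_pred; rewrite ?p_pr //.
    exact: leq_trans (p_ge_p0 le_xt).
  by apply: leq_trans (p_le_pt le_yt) (leq_trans p_spread _); rewrite leq_mul2l p_ge_p0.
move: q_i q_j; rewrite !Euclid_dvdM //.
rewrite (dvdn_prime2 q_pr (p_pr le_it)) (dvdn_prime2 q_pr (p_pr le_jt)).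
case/orP=> [/eqP qi | q_i1]; case/orP=> [/eqP qj | q_j1].
- by move: (p_incr lt_ij le_jt); rewrite -qi -qj ltnn.
- by move: (ndvd i j le_it le_jt); rewrite -qi q_j1.
- by move: (ndvd j i le_jt le_it); rewrite -qj q_i1.
- by move: (no_common_odd lt_ij le_jt q_pr q_odd); rewrite q_i1 q_j1.
Qed.

Lemma exists_admissible_prime : exists2 i, i <= t & coprime l (p i * (p i).-1).
Proof.
have [i le_it no_hit] := @pigeonhole_index _ (primes l) t.+1
  (fun i q => q \in primes (p i * (p i).-1)) few_primes no_shared_factor.
exists i => //; rewrite coprime_sym coprime_has_primes //.
by have := prime_gt1 (p_pr le_it); rewrite muln_gt0; lia.
Qed.

End AdmissiblePrimeExists.

(* The t+1 primes p_1 < ... < p_{t+1} are p 0 < ... < p t. *)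
Theorem lemma4 (l t : nat) (p : nat -> nat) :
  0 < l -> odd l -> size (primes l) <= t ->
  (forall i, i <= t -> prime (p i)) ->
  (forall i j, i < j -> j <= t -> p i < p j) ->
  3 <= p 0 ->
  (forall i j, i < j -> j <= t -> forall q, prime q -> odd q ->
      ~~ ((q %| (p i).-1) && (q %| (p j).-1))) ->
  forall n : nat, (p t).-1 <= n -> n <= 2 * p 0 - 2 -> ~ powerful (Omega l n).
Proof.
move=> l_gt0 l_odd few_primes p_pr p_incr p0_ge3 no_common_odd n pt_le le_p0.
have p_spread : p t <= 2 * p 0 by lia.
have [i le_it co_l] := exists_admissible_prime l_gt0 l_odd few_primes p_pr p_incr
  p0_ge3 p_spread no_common_odd.
have p0_le := p_ge_p0 p_incr le_it; have le_pt := p_le_pt p_incr le_it.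
by apply: (Omega_not_powerful (p_pr i le_it) l_gt0 l_odd co_l); lia.
Qed.
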